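(* For every ${\bf F}(z)\in\hat\Lambda^{(s)}\otimes V$ and every $N\ge2$, $$(\bar\pi_{N-1}\otimes1)\big(\mathcal D{\bf F}\big)(x_1)=\mathcal D^{(N)}_1\,(\bar\pi_{N-1}\otimes1){\bf F}(x_1).$$
   Context: Fix $s\ge1$, $\beta\in{\mathbb C}$. Let $\hat\Lambda^{(s)}={\mathbb C}[p_{a,k}: a=1,\dots,s,\ k\ge0]$, $e_1,\dots,e_s$ the standard basis of ${\mathbb C}^s$, $V={\mathbb C}[z]\otimes{\mathbb C}^s$. For $c=1,\dots,s$: $\Phi_c(z)$ is the substitution $p_{c,k}\mapsto p_{c,k}+z^k$ ($k\ge0$), $\Phi_c^{-1}(z)$ the substitution $p_{c,k}\mapsto p_{c,k}-z^k$ ($k\ge0$), and $\varphi^-_c(z)=\sum_{k\ge0}p_{c,k}z^{-k}$. $\langle0|_+$ is the constant-term functional on $\hat\Lambda^{(s)}$. For ${\bf F}(z)=\sum_cF_c(z)\otimes e_c$ ($F_c\in\hat\Lambda^{(s)}[z]$), $(\bar\pi_{N-1}\otimes1){\bf F}(x_1)=\sum_{c_1,\dots,c_N}\langle0|_+\Phi_{c_N}(x_N)\cdots\Phi_{c_2}(x_2)F_{c_1}(x_1)\,e_{c_1}\otimes\cdots\otimes e_{c_N}$, a $({\mathbb C}^s)^{\otimes N}$-valued polynomial in $x_1,\dots,x_N$ (the $i$-th factor carries $x_i$). The operator $\mathcal D$ on $\hat\Lambda^{(s)}\otimes V$ is defined by $$\mathcal D(F_a(z)\otimes e_a)=\Big(z\frac{d}{dz}F_a(z)+\beta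 z\,\mathrm{Res}_{\xi}\sum_{c=1}^s\frac{1}{\xi^2(1-z/\xi)}\varphi^-_c(\xi)\Phi_c^{-1}(\xi)\Phi_c(z)F_a(\xi)\Big)\otimes e_a,$$ where $\frac{1}{1-z/\xi}=\sum_{m\ge0}z^m\xi^{-m}$ and $\mathrm{Res}_\xi$ takes the coefficient of $\xi^{-1}$. The Heckman–Dunkl operator acting on $({\mathbb C}^s)^{\otimes N}$-valued polynomials in $x_1,\dots,x_N$ is $\mathcal D^{(N)}_1=x_1\frac{\partial}{\partial x_1}+\beta\sum_{j\ne1}\frac{x_1}{x_1-x_j}(1-K_{1j})$, where $K_{1j}$ swaps the variables $x_1,x_j$ (not the tensor factors). *)

From HB Require Import structures.
From mathcomp Require Import all_boot all_order all_algebra.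
Set Implicit Arguments. Unset Strict Implicit. Unset Printing Implicit Defensive.
Import Order.TTheory GRing.Theory Num.Theory.
Local Open Scope ring_scope.

(*   VP a k  = p_{a+1,k}   (generators of \hat\Lambda^{(s)}, colour a 0-based) *)
(*   VZ      = z           (the variable of V = C[z] (x) C^s)                *)
(*   VXi     = xi          (the residue variable)                            *)
(*   VX i    = x_{i+1}     (the variables x_1,...,x_N, 0-based)              *)
Inductive var := VP of nat & nat | VZ | VXi | VX of nat.

Definition var_eq_dec : comparable var.
Proof. move=> u v; rewrite /decidable; decide equality; exact: (fun m n : nat => decP (m =P n)). Defined.

HB.instance Definition _ := hasDecEq.Build var (compareP var_eq_dec).

(* Polynomials in the variables [var] with coefficients in C, written as a   *)
(* formal sum of terms  c * v_1 * ... * v_r  (list of (c, [v_1;...;v_r])).   *)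
(* Two such expressions denote the same polynomial iff they have the same    *)
(* evaluation [meval] everywhere (C infinite).  All operations below are     *)
(* compatible with this identification.                                      *)
Section MPoly.
Context {C : comNzRingType}.

Definition mpoly := seq (C * seq var).

Definition meval (e : var -> C) (p : mpoly) : C :=
  \sum_(t <- p) t.1 * \prod_(v <- t.2) e v.

Definition mzero : mpoly := [::].
Definition mconst (c : C) : mpoly := [:: (c, [::])].
Definition mvar (v : var) : mpoly := [:: (1, [:: v])].
Definition madd (p q : mpoly) : mpoly := p ++ q.
Definition mscale (c : C) (p : mpoly) : mpoly := [seq (c * t.1, t.2) | t <- p].
Definition msub (p q : mpoly) : mpoly := madd p (mscale (-1) q).
Definition mmul (p q : mpoly) : mpoly :=
  [seq (t.1 * u.1, t.2 ++ u.2) | t <- p, u <- q].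
Definition mpow (p : mpoly) (n : nat) : mpoly := iter n (mmul p) (mconst 1).
Definition msum (ps : seq mpoly) : mpoly := flatten ps.

Definition msubst (f : var -> mpoly) (p : mpoly) : mpoly :=
  flatten [seq mscale t.1 (foldr mmul (mconst 1) (map f t.2)) | t <- p].

Definition mderiv (v : var) (p : mpoly) : mpoly :=
  [seq (t.1 *+ count_mem v t.2, rem v t.2) | t <- p].

Definition mcoef (v : var) (j : nat) (p : mpoly) : mpoly :=
  [seq (t.1, filter (predC1 v) t.2) | t <- p & count_mem v t.2 == j].

(* an upper bound for the degree in v *)
Definition mdeg (v : var) (p : mpoly) : nat := \max_(t <- p) count_mem v t.2.

Definition Phi (c : nat) (w : mpoly) : mpoly -> mpoly :=
  msubst (fun v => match v with
                   | VP a k => if a == c then madd (mvar v) (mpow w k) else mvar v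
                   | _ => mvar v end).

Definition Phi_inv (c : nat) (w : mpoly) : mpoly -> mpoly :=
  msubst (fun v => match v with
                   | VP a k => if a == c then msub (mvar v) (mpow w k) else mvar v
                   | _ => mvar v end).

Definition zsubst (w : mpoly) : mpoly -> mpoly :=
  msubst (fun v => if v == VZ then w else mvar v).

Definition vacuum : mpoly -> mpoly :=
  msubst (fun v => if v is VP _ _ then mzero else mvar v).

(* Formal series in xi^{-1}: S n is the coefficient of xi^{-n}. *)
Definition series := nat -> mpoly.

Definition smul (S T : series) : series :=
  fun n => msum [seq mmul (S i) (T (n - i)%N) | i <- iota 0 n.+1].

(* 1 / (xi^2 (1 - z/xi)) = sum_{m>=0} z^m xi^{-m-2} *)
Definition kernel_series : series :=
  fun n => if (2 <= n)%N then mpow (mvar VZ) (n - 2) else mzero.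

(* phi^-_c(xi) = sum_{k>=0} p_{c,k} xi^{-k} *)
Definition phim_series (c : nat) : series := fun n => mvar (VP c n).

(* Res_xi ( S(xi) * G(xi) ) for a series S in xi^{-1} and a polynomial G in xi:
   the coefficient of xi^{-1}, i.e. sum_j S_{j+1} * [xi^j] G. *)
Definition Res_xi (S : series) (G : mpoly) : mpoly :=
  msum [seq mmul (S j.+1) (mcoef VXi j G) | j <- iota 0 (mdeg VXi G).+1].

(* An element F(z) = sum_a F_a(z) (x) e_a of \hat\Lambda^{(s)} (x) V is a family
   F : 'I_s -> mpoly whose members only involve the p_{a,k} (a < s) and z. *)
Definition in_LambdaZ (s : nat) (p : mpoly) : bool :=
  all (fun t => all (fun v => match v with
                              | VP a _ => (a < s)%N
                              | VZ => true
                              | _ => false end) t.2) p.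

Definition calD (s : nat) (beta : C) (F : 'I_s -> mpoly) : 'I_s -> mpoly :=
  fun a =>
    madd (mmul (mvar VZ) (mderiv VZ (F a)))
         (mscale beta (mmul (mvar VZ)
            (msum [seq Res_xi (smul kernel_series (phim_series c))
                        (Phi_inv c (mvar VXi) (Phi c (mvar VZ) (zsubst (mvar VXi) (F a))))
                   | c <- map val (enum 'I_s)]))).

(* (\bar\pi_{N-1} (x) 1) F, component along e_{c_1} (x) ... (x) e_{c_N}, where
   cs = [:: c_1; ...; c_N]:
   <0|_+ Phi_{c_N}(x_N) ... Phi_{c_2}(x_2) F_{c_1}(x_1). *)
Definition pibar (s : nat) (F : 'I_s -> mpoly) (cs : seq 'I_s) : mpoly :=
  match cs with
  | [::] => mzero
  | c1 :: rest =>
      vacuum (foldl (fun G ic => Phi (val ic.2) (mvar (VX ic.1)) G)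
                    (zsubst (mvar (VX 0)) (F c1))
                    (zip (iota 1 (size rest)) rest))
  end.

End MPoly.

Definition xenv {C : comNzRingType} (x : nat -> C) : var -> C :=
  fun v => if v is VX i then x i else 0.

(* x with x_1 and x_{j+1} swapped (the action of K_{1,j+1} on the variables) *)
Definition xswap {C : Type} (x : nat -> C) (j : nat) : nat -> C :=
  fun i => if i == 0%N then x j else if i == j then x 0%N else x i.

(* Value at the point x (with x_1 <> x_j for j <> 1) of
   D^{(N)}_1 f = x_1 d/dx_1 f + beta sum_{j<>1} x_1/(x_1 - x_j) (1 - K_{1j}) f,
   for a scalar polynomial f(x_1,...,x_N) (D^{(N)}_1 acts componentwise on
   (C^s)^{(x)N}-valued polynomials since K_{1j} does not permute tensor factors). *)
Definition HD1_at {C : fieldType} (beta : C) (N : nat) (f : @mpoly C)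
    (x : nat -> C) : C :=
  meval (xenv x) (mmul (mvar (VX 0)) (mderiv (VX 0) f))
  + beta * \sum_(1 <= j < N)
      x 0%N / (x 0%N - x j) * (meval (xenv x) f - meval (xenv (xswap x j)) f).

From HB Require Import structures.
From mathcomp Require Import all_boot all_order all_algebra.
From mathcomp Require Import ring.
Import Order.TTheory GRing.Theory Num.Theory.
Set Implicit Arguments. Unset Strict Implicit. Unset Printing Implicit Defensive.
Local Open Scope ring_scope.

(* Evaluating [pibar] at x turns [F_{c_1}] into a function of [z = x_1] and of
   the power sums [p_{b,k} = sum_{j >= 2, c_j = b} x_j^k].  There,
   [Phi_c^{-1}(xi) Phi_c(z) F(xi)] becomes a polynomial [h(xi)] with
   [h(x_1) = F], and for [c_j = c] the value [h(x_j)] is [F] with [x_1] and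
   [x_j] swapped.  The kernel [phi^-_c(xi) / (xi^2 (1 - z/xi))] becomes
   [sum_{j : c_j = c} 1/((xi - x_1)(xi - x_j))], so the residue against [h]
   yields the divided differences [(h(x_1) - h(x_j))/(x_1 - x_j)]; with the
   prefactor [beta x_1] and summed over [c] this is the Dunkl term.  Since the
   power sums do not involve [x_1], [z d/dz] becomes [x_1 d/dx_1]. *)

Section EvalMap.
Variables (C R : comNzRingType) (f : {rmorphism C -> R}).

(* With [f := polyC] this evaluates into [{poly C}], which is how coefficients
   and derivatives in one variable are read off below. *)
Definition meval_map (e : var -> R) (p : @mpoly C) : R :=
  \sum_(t <- p) f t.1 * \prod_(v <- t.2) e v.

Lemma eq_meval_map e1 e2 p : e1 =1 e2 -> meval_map e1 p = meval_map e2 p.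
Proof.
by move=> e12; apply: eq_bigr => t _; congr (_ * _); apply: eq_bigr => v _.
Qed.

Lemma eq_meval_map_Lambda s e1 e2 p : in_LambdaZ s p ->
    (forall b k, (b < s)%N -> e1 (VP b k) = e2 (VP b k)) -> e1 VZ = e2 VZ ->
  meval_map e1 p = meval_map e2 p.
Proof.
move=> /allP pL eP eZ; rewrite /meval_map !big_seq; apply: eq_bigr => t tp.
congr (_ * _); rewrite !big_seq; apply: eq_bigr => v vt.
by move: (allP (pL t tp) v vt); case: v {vt} => // b k /eP.
Qed.

Lemma meval_map0 e : meval_map e mzero = 0.
Proof. exact: big_nil. Qed.

Lemma meval_mapD e p q : meval_map e (madd p q) = meval_map e p + meval_map e q.
Proof. exact: big_cat. Qed.

Lemma meval_map_const e c : meval_map e (mconst c) = f c.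
Proof. by rewrite /meval_map big_seq1 big_nil mulr1. Qed.

Lemma meval_map_var e v : meval_map e (mvar v) = e v.
Proof. by rewrite /meval_map !big_seq1 rmorph1 mul1r. Qed.

Lemma meval_mapZ e c p : meval_map e (mscale c p) = f c * meval_map e p.
Proof.
rewrite /meval_map big_map mulr_sumr; apply: eq_bigr => t _.
by rewrite rmorphM mulrA.
Qed.

Lemma meval_mapB e p q : meval_map e (msub p q) = meval_map e p - meval_map e q.
Proof. by rewrite meval_mapD meval_mapZ rmorphN1 mulN1r. Qed.

Lemma meval_mapM e p q : meval_map e (mmul p q) = meval_map e p * meval_map e q.
Proof.
rewrite /meval_map /mmul -(map_allpairs (fun tu : (C * seq var) * (C * seq var) =>
                          (tu.1.1 * tu.2.1, tu.1.2 ++ tu.2.2)) pair).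
rewrite big_map big_allpairs.
rewrite mulr_suml; apply: eq_bigr => t _; rewrite mulr_sumr; apply: eq_bigr => u _.
by rewrite /= rmorphM big_cat mulrACA.
Qed.

Lemma meval_mapX e p n : meval_map e (mpow p n) = meval_map e p ^+ n.
Proof.
elim: n => [|n IHn]; first by rewrite meval_map_const rmorph1.
by rewrite /mpow iterS meval_mapM IHn exprS.
Qed.

Lemma meval_map_sum e ps : meval_map e (msum ps) = \sum_(p <- ps) meval_map e p.
Proof.
elim: ps => [|p ps IHps]; first by rewrite meval_map0 big_nil.
by rewrite big_cons -IHps -meval_mapD.
Qed.

Lemma meval_map_prod e ps :
  meval_map e (foldr mmul (mconst 1) ps) = \prod_(p <- ps) meval_map e p.
Proof.
elim: ps => [|p ps IHps]; first by rewrite meval_map_const rmorph1 big_nil.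
by rewrite /= meval_mapM IHps big_cons.
Qed.

Lemma meval_map_subst e g p :
  meval_map e (msubst g p) = meval_map (fun v => meval_map e (g v)) p.
Proof.
elim: p => [|t p IHp]; first by rewrite /meval_map !big_nil.
rewrite [msubst g _]/= -/(madd _ (msubst g p)) meval_mapD IHp.
by rewrite meval_mapZ meval_map_prod big_map /meval_map big_cons.
Qed.

End EvalMap.

Lemma meval_idfun (C : comNzRingType) (e : var -> C) p :
  meval e p = meval_map idfun e p.
Proof. by []. Qed.

Section OneVariable.
Variable C : comNzRingType.
Implicit Types (e : var -> C) (w : var) (p : @mpoly C).

Definition mpoly_in w e p : {poly C} :=
  meval_map polyC (fun v => if v == w then 'X else (e v)%:P) p.

Lemma prod_mpoly_in_var e w vs :
  \prod_(v <- vs) (if v == w then 'X else (e v)%:P) =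
  (\prod_(v <- filter (predC1 w) vs) e v)%:P * 'X^(count_mem w vs).
Proof.
elim: vs => [|v vs IHvs]; first by rewrite !big_nil mul1r.
rewrite big_cons IHvs /=; case: eqP => [->|/eqP v_w] /=.
  by rewrite add1n exprS mulrCA.
by rewrite add0n big_cons polyCM mulrA.
Qed.

Lemma coef_mpoly_in w e j p : (mpoly_in w e p)`_j = meval e (mcoef w j p).
Proof.
rewrite /mpoly_in /meval_map coef_sum /meval big_map big_filter [RHS]big_mkcond.
apply: eq_bigr => t _; rewrite prod_mpoly_in_var mulrA -polyCM coefCM coefXn.
by rewrite eq_sym; case: eqP; rewrite ?mulr1 ?mulr0.
Qed.

Lemma mcoef_gt_mdeg w j p : (mdeg w p < j)%N -> mcoef w j p = [::].
Proof.
move=> deg_lt; apply/eqP; rewrite -size_eq0 size_map size_filter eqn0Ngt -has_count.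
apply/hasPn => t tp; apply/eqP => t_j; move: deg_lt.
by rewrite -t_j ltnNge (leq_bigmax_seq _ tp).
Qed.

Lemma size_mpoly_in w e p : (size (mpoly_in w e p) <= (mdeg w p).+1)%N.
Proof.
apply/leq_sizeP => j j_gt.
by rewrite coef_mpoly_in mcoef_gt_mdeg // /meval big_nil.
Qed.

Lemma horner_meval_map (E : var -> {poly C}) p a :
  (meval_map polyC E p).[a] = meval (fun v => (E v).[a]) p.
Proof.
rewrite horner_sum; apply: eq_bigr => t _.
by rewrite hornerM hornerC horner_prod.
Qed.

Lemma meval_Res_xi e (S : series) G :
  meval e (Res_xi S G) =
  \sum_(j <- iota 0 (mdeg VXi G).+1) meval e (S j.+1) * (mpoly_in VXi e G)`_j.
Proof.
rewrite meval_idfun meval_map_sum big_map; apply: eq_bigr => j _.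
by rewrite meval_mapM coef_mpoly_in.
Qed.

(* Coefficient 0 is only needed to carry the induction for coefficient 1. *)
Lemma coef_prod_shiftX e w vs :
  let P := \prod_(v <- vs) (if v == w then (e v)%:P + 'X else (e v)%:P) in
  P`_0 = \prod_(v <- vs) e v /\
  P`_1 = (count_mem w vs)%:R * \prod_(v <- rem w vs) e v.
Proof.
elim: vs => [|v vs [IH0 IH1]] /=; first by rewrite !big_nil !coefC mul0r.
rewrite !big_cons; case: eqP => [->|/eqP v_w].
  split; first by rewrite coef0M coefD coefC coefX addr0 IH0.
  rewrite mulrDl coefD coefCM (mulrC 'X) coefMX /= IH0 IH1 add1n mulrS.
  have [w_vs|w_vs] := boolP (w \in vs); last first.
    by rewrite (count_memPn w_vs) rem_id // mul0r mulr0 add0r addr0 mul1r.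
  by rewrite (perm_big _ (perm_to_rem w_vs)) big_cons mulrDl mul1r addrC mulrCA.
split; first by rewrite coef0M coefC IH0.
by rewrite coefCM IH1 /= add0n big_cons mulrCA.
Qed.

Lemma coef_meval_map_shift e w p :
  (meval_map polyC (fun v => if v == w then (e v)%:P + 'X else (e v)%:P) p)`_1 =
  meval e (mderiv w p).
Proof.
rewrite coef_sum /meval big_map; apply: eq_bigr => t _.
rewrite coefCM; have [_ ->] := coef_prod_shiftX e w t.2.
by rewrite mulrA mulr_natr.
Qed.

End OneVariable.

Lemma big_zip_iota (R : nmodType) (T : Type) (h : nat * T -> R) (x0 : T)
    (l : seq T) m :
  \sum_(ic <- zip (iota m (size l)) l) h ic =
  \sum_(i < size l) h (m + i, nth x0 l i)%N.
Proof.
elim: l m => [|a l IHl] m /=; first by rewrite big_nil big_ord0.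
rewrite big_cons big_ord_recl IHl addn0; congr (_ + _).
by apply: eq_bigr => i _; rewrite addSnnS.
Qed.

Section Pibar.
Variables (C R : comNzRingType) (f : {rmorphism C -> R}) (s : nat).
Implicit Types (e : var -> R) (rest : seq 'I_s).

Definition chain_env e (L : seq (nat * 'I_s)) : var -> R :=
  fun v => match v with
           | VP b k => \sum_(ic <- L) (b == val ic.2)%:R * e (VX ic.1) ^+ k
           | _ => e v end.

Lemma meval_map_vacuum_Phi_chain e L (Q : @mpoly C) :
  meval_map f e (vacuum (foldl (fun G ic => Phi (val ic.2) (mvar (VX ic.1)) G) Q L))
  = meval_map f (chain_env e L) Q.
Proof.
elim: L Q => [|ic L IHL] Q /=.
  rewrite meval_map_subst; apply: eq_meval_map => -[b k| | |i] /=;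
    by rewrite ?meval_map0 ?meval_map_var ?big_nil.
rewrite IHL meval_map_subst; apply: eq_meval_map => -[b k| | |i] /=;
  rewrite ?meval_map_var // big_cons.
case: eqP => [->|_]; last by rewrite meval_map_var mul0r add0r.
rewrite -[_ :: mpow _ _]/(madd (mvar _) (mpow (mvar (VX ic.1)) k)).
by rewrite meval_mapD meval_mapX !meval_map_var mul1r addrC.
Qed.

Definition pibar_env e (c1 : 'I_s) rest : var -> R :=
  fun v => match v with
           | VP b k => \sum_(i < size rest)
                         (b == val (nth c1 rest i))%:R * e (VX i.+1) ^+ k
           | VZ => e (VX 0)
           | _ => e v end.

Lemma meval_map_pibar (G : 'I_s -> @mpoly C) e (c1 : 'I_s) rest :
  meval_map f e (pibar G (c1 :: rest)) = meval_map f (pibar_env e c1 rest) (G c1).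
Proof.
rewrite /pibar meval_map_vacuum_Phi_chain meval_map_subst.
apply: eq_meval_map => -[b k| | |i] /=; rewrite ?meval_map_var //=.
exact: (big_zip_iota (fun ic : nat * 'I_s => (b == val ic.2)%:R * e (VX ic.1) ^+ k)).
Qed.

Lemma meval_map_Phi_inv_Phi (p : @mpoly C) c e e' :
    in_LambdaZ s p -> e' VZ = e VXi ->
    (forall b k, (b < s)%N ->
       e' (VP b k) = e (VP b k) + (b == c)%:R * (e VZ ^+ k - e VXi ^+ k)) ->
  meval_map f e (Phi_inv c (mvar VXi) (Phi c (mvar VZ) (zsubst (mvar VXi) p)))
  = meval_map f e' p.
Proof.
move=> pL e'Z e'P; rewrite !meval_map_subst.
apply: (eq_meval_map_Lambda f pL) => [b k b_lt|] /=; last by rewrite !meval_map_var.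
rewrite e'P // meval_map_var /=; case: eqP => [->|/eqP b_c]; last first.
  by rewrite meval_map_var /= (negbTE b_c) meval_map_var mul0r addr0.
rewrite -[_ :: mpow _ _]/(madd (mvar (VP c k)) (mpow (mvar VZ) k)).
rewrite meval_mapD meval_mapX !meval_map_var /= eqxx meval_mapB meval_mapX.
by rewrite !meval_map_var mul1r; ring.
Qed.

End Pibar.

(* The coefficient of [xi^{-j-1}] in [kernel_series * (sum_k b^k xi^{-k})] at
   [z = a], i.e. in the expansion of [1 / ((xi - a) (xi - b))]. *)
Definition divdiff_pow (C : comNzRingType) (j : nat) (a b : C) : C :=
  \sum_(i <- iota 0 j.+2) (if (2 <= i)%N then a ^+ (i - 2) else 0) * b ^+ (j.+1 - i).

Lemma mul_divdiff_pow (C : comNzRingType) j (a b : C) :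
  (a - b) * divdiff_pow j a b = a ^+ j - b ^+ j.
Proof.
rewrite /divdiff_pow; elim: j => [|j IHj].
  by rewrite /= !big_cons big_nil /= !mul0r !addr0 mulr0 !expr0 subrr.
have iotaE m : iota 0 m = index_iota 0 m by rewrite /index_iota subn0.
rewrite !iotaE in IHj *.
rewrite big_nat_recr //= subnn expr0 mulr1 !subSS subn0.
have -> : \sum_(0 <= i < j.+2) (if (2 <= i)%N then a ^+ (i - 2) else 0) * b ^+ (j.+2 - i)
   = b * \sum_(0 <= i < j.+2) (if (2 <= i)%N then a ^+ (i - 2) else 0) * b ^+ (j.+1 - i).
  rewrite mulr_sumr !big_nat; apply: eq_bigr => i /andP [_ i_lt].
  by rewrite subSn // exprS mulrCA.
by rewrite mulrDr mulrCA IHj !exprS; ring.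
Qed.

Lemma sum_divdiff_pow_coef (K : fieldType) (a b : K) (h : {poly K}) d :
    a != b -> (size h <= d.+1)%N ->
  \sum_(j <- iota 0 d.+1) divdiff_pow j a b * h`_j = (h.[a] - h.[b]) / (a - b).
Proof.
move=> a_b size_h; have ab_neq0 : a - b != 0 by rewrite subr_eq0.
apply: (mulIf ab_neq0); rewrite divfK // mulr_suml.
rewrite -{1}(subn0 d.+1) -/(index_iota 0 _) big_mkord.
rewrite !(horner_coef_wide _ size_h) -sumrB; apply: eq_bigr => j _.
by rewrite mulrAC (mulrC (divdiff_pow _ _ _)) mul_divdiff_pow mulrBl !(mulrC h`_j).
Qed.

Lemma sum_val_eq_count (R : nzSemiRingType) n (r : seq 'I_n) (d : 'I_n) :
  \sum_(c <- r) ((val c == val d)%:R : R) = (count_mem d r)%:R.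
Proof.
elim: r => [|c r IHr]; first by rewrite big_nil.
by rewrite big_cons IHr /= natrD val_eqE.
Qed.

Section DunklAction.
Variables (C : fieldType) (s : nat) (F : 'I_s -> @mpoly C).
Hypothesis F_Lambda : forall a, in_LambdaZ s (F a).
Variables (c1 : 'I_s) (rest : seq 'I_s) (x : nat -> C).

Local Notation n := (size rest).
Local Notation E := (pibar_env (xenv x) c1 rest).
Local Notation Eswap l := (pibar_env (xenv (xswap x l.+1)) c1 rest).
Local Notation Fconj c :=
  (Phi_inv c (mvar VXi) (Phi c (mvar VZ) (zsubst (mvar VXi) (F c1)))).

Lemma meval_euler_pibar :
  meval (xenv x) (mmul (mvar (VX 0)) (mderiv (VX 0) (pibar F (c1 :: rest))))
  = x 0%N * meval E (mderiv VZ (F c1)).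
Proof.
rewrite meval_idfun meval_mapM meval_map_var; congr (_ * _).
rewrite -!meval_idfun -!coef_meval_map_shift meval_map_pibar.
apply: (congr1 (fun q : {poly C} => q`_1)).
apply: (eq_meval_map_Lambda polyC (F_Lambda c1)) => // b k _ /=.
rewrite (raddf_sum polyC); apply: eq_bigr => i _.
by rewrite -(rmorphXn polyC) -(rmorph_nat polyC) -(rmorphM polyC).
Qed.

Lemma meval_kernel_phim b j :
  meval E (smul kernel_series (phim_series b) j.+1) =
  \sum_(l < n) (b == val (nth c1 rest l))%:R * divdiff_pow j (x 0%N) (x l.+1).
Proof.
rewrite meval_idfun meval_map_sum big_map.
under eq_bigr => i _ do rewrite meval_mapM meval_map_var /= mulr_sumr.
rewrite exchange_big; apply: eq_bigr => l _; rewrite mulr_sumr; apply: eq_bigr => i _.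
rewrite /kernel_series; case: ifP => _; last by rewrite meval_map0 !mul0r mulr0.
by rewrite meval_mapX meval_map_var mulrCA.
Qed.

Lemma pibar_env_swap l b k : (l < n)%N ->
  Eswap l (VP b k) = E (VP b k) +
    (b == val (nth c1 rest l))%:R * (x 0%N ^+ k - x l.+1 ^+ k).
Proof.
move=> l_lt; rewrite /= (bigD1 (Ordinal l_lt)) //= [in RHS](bigD1 (Ordinal l_lt)) //=.
rewrite {1}/xswap /= eqxx.
rewrite (eq_bigr (fun i : 'I_n => (b == nth c1 rest i)%:R * x i.+1 ^+ k)).
  by ring.
move=> i /negbTE i_l; have i_l' : (i == l :> nat) = false by [].
by rewrite /xswap /= eqSS i_l'.
Qed.

Lemma horner_mpoly_in_Phi_inv_Phi c a (e' : var -> C) : e' VZ = a ->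
    (forall b k, (b < s)%N ->
       e' (VP b k) = E (VP b k) + (b == c)%:R * (x 0%N ^+ k - a ^+ k)) ->
  (mpoly_in VXi E (Fconj c)).[a] = meval e' (F c1).
Proof.
move=> e'Z e'P; rewrite horner_meval_map meval_idfun.
apply: (meval_map_Phi_inv_Phi _ (F_Lambda c1)) => [|b k b_lt] /=.
  by rewrite hornerX.
by rewrite e'P // !hornerC hornerX.
Qed.

Hypothesis x_sep : forall l, (l < n)%N -> x 0%N != x l.+1.

Lemma meval_residue (c : 'I_s) :
  meval E (Res_xi (smul kernel_series (phim_series (val c))) (Fconj (val c)))
  = \sum_(l < n) (val c == val (nth c1 rest l))%:R *
      ((meval E (F c1) - meval (Eswap l) (F c1)) / (x 0%N - x l.+1)).
Proof.
rewrite meval_Res_xi.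
under eq_bigr => j _ do rewrite meval_kernel_phim mulr_suml.
rewrite exchange_big; apply: eq_bigr => l _.
under eq_bigr => j _ do rewrite -mulrA.
rewrite -mulr_sumr; case: eqP => [c_l|_]; last by rewrite !mul0r.
congr (_ * _).
rewrite (sum_divdiff_pow_coef (x_sep (ltn_ord l)) (size_mpoly_in _ _ _)).
rewrite (@horner_mpoly_in_Phi_inv_Phi _ _ E) // => [|b k _]; last first.
  by rewrite subrr mulr0 addr0.
rewrite (@horner_mpoly_in_Phi_inv_Phi _ _ (Eswap l)) // => b k _.
by rewrite c_l pibar_env_swap.
Qed.

Lemma meval_calD beta :
  meval E (calD beta F c1) =
  x 0%N * meval E (mderiv VZ (F c1)) +
  beta * \sum_(l < n)
           x 0%N / (x 0%N - x l.+1) * (meval E (F c1) - meval (Eswap l) (F c1)).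
Proof.
rewrite meval_idfun /calD meval_mapD meval_mapZ !meval_mapM !meval_map_var.
rewrite meval_map_sum !big_map.
under eq_bigr => c _ do rewrite -meval_idfun meval_residue.
rewrite [X in _ + _ * (_ * X)]exchange_big /=.
under eq_bigr => l _ do rewrite -mulr_suml sum_val_eq_count enumP mul1r.
congr (_ + beta * _); rewrite mulr_sumr; apply: eq_bigr => l _.
by rewrite mulrA mulrAC.
Qed.

End DunklAction.

Theorem proposition3p1 (C : numClosedFieldType) (s : nat) (beta : C)
    (F : 'I_s -> @mpoly C) :
  (0 < s)%N ->
  (forall a, in_LambdaZ s (F a)) ->
  forall N : nat, (2 <= N)%N ->
  forall (c : N.-tuple 'I_s) (x : nat -> C),
    (forall j, (0 < j < N)%N -> x 0%N != x j) ->
    meval (xenv x) (pibar (calD beta F) c) = HD1_at beta N (pibar F c) x.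
Proof.
move=> _ F_Lambda N N_ge2 [[|c1 rest] size_c] x x_neq; move/eqP: (size_c) => N_eq;
  subst N => //; rewrite -[tval _]/(c1 :: rest).
have x_sep l : (l < size rest)%N -> x 0%N != x l.+1 by move=> l_lt; apply: x_neq.
rewrite /HD1_at !meval_idfun !meval_map_pibar -!meval_idfun.
rewrite (meval_calD F_Lambda _ x_sep) (meval_euler_pibar F_Lambda).
congr (_ + beta * _); rewrite big_add1 succnK big_mkord; apply: eq_bigr => l _.
by rewrite [meval _ (pibar _ _)]meval_idfun meval_map_pibar.
Qed.
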